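(* For integers $d \ge 1$ and $n \ge 0$ define $$\widehat{\mathcal{I}}_{d,n} := n^d \int_{[0,1)^d} \Big[\prod_{j=1}^d (1-x_j)\Big]^{d-1} \exp\Big[-n \prod_{j=1}^d (1-x_j)\Big] \, dx_1\cdots dx_d.$$ Then for fixed $d$, as $n \to \infty$, $$\widehat{\mathcal{I}}_{d,n} = (\ln n)^{d-1} \sum_{j=0}^{d-1} \frac{(-1)^j \Gamma^{(j)}(d)}{j!\,(d-1-j)!} (\ln n)^{-j} + O\big((n \ln n)^{d-1} e^{-n}\big),$$ where $\Gamma^{(j)}$ denotes the $j$-th derivative of the Gamma function. *)

From Stdlib Require Import Arith Reals List.
Open Scope R_scope.

Definition improper_int_0_inf (f : R -> R) (v : R) : Prop :=
  forall eps, 0 < eps ->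
    exists a0 b0, 0 < a0 /\ a0 < b0 /\
      forall a b, 0 < a -> a <= a0 -> b0 <= b ->
        exists pr : Riemann_integrable f a b, Rabs (RiemannInt pr - v) < eps.

Fixpoint GammaDer (j : nat) (g : R -> R) : Prop :=
  match j with
  | O => forall s, 0 < s ->
           improper_int_0_inf (fun t => Rpower t (s - 1) * exp (- t)) (g s)
  | S j' => exists h, GammaDer j' h /\
              forall s, 0 < s -> derivable_pt_lim h s (g s)
  end.

(* iter_int d f v : v is the iterated Riemann integral over [0,1]^d of
   f, where f takes the list [x1; ...; xd] of coordinates. *)
Fixpoint iter_int (d : nat) (f : list R -> R) (v : R) : Prop :=
  match d with
  | O => v = f nil
  | S d' => exists g : R -> R,
      (forall x, 0 <= x <= 1 -> iter_int d' (fun xs => f (x :: xs)) (g x)) /\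
      exists pr : Riemann_integrable g 0 1, RiemannInt pr = v
  end.

Definition prod_one_minus (xs : list R) : R :=
  fold_right (fun x acc => (1 - x) * acc) 1 xs.

Definition Ihat_integrand (d n : nat) (xs : list R) : R :=
  INR n ^ d * (prod_one_minus xs) ^ (d - 1)
    * exp (- INR n * prod_one_minus xs).

From Stdlib Require Import Arith Reals Lra Lia Psatz FunctionalExtensionality.
From Coquelicot Require Import Coquelicot.
Open Scope R_scope.

(* Substituting t = e^x turns Gamma^(j)(s) into the integral over the whole line of
   x^j e^(s x - e^x), which decays exponentially at both ends.  An integral over [0,1)^d of a
   function of prod (1 - x_j) is the d-fold iterate, evaluated at c = 1, of the averaging
   operator phi |-> (c |-> (1/c) int_0^c phi).  For phi(p) = n^d p^(d-1) e^(-n p), induction on k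
   shows that c times the (k+1)-fold iterate equals
     sum_(i <= k) L^(k-i)/(k-i)! (-1)^i/i! A_i(L)   at L = ln (n c),
   where A_i(L) = int_(-oo)^L t^i e^(d t - e^t) dt: both sides vanish as c -> 0+ and have the
   same derivative.  Finally A_i(ln n) differs from Gamma^(i)(d) by a tail integral, which an
   explicit antiderivative bounds by 2 (ln n)^i n^(d-1) e^(-n). *)

Lemma exp_le_exp_compat x y : x <= y -> exp x <= exp y.
Proof.
  intros H. destruct (Req_dec x y) as [->|E]; [lra|].
  left. apply exp_increasing. lra.
Qed.

Lemma exp_INR_mul m x : exp (INR m * x) = exp x ^ m.
Proof.
  induction m as [|m IH].
  - simpl. rewrite Rmult_0_l, exp_0. reflexivity.
  - rewrite S_INR, Rmult_plus_distr_r, Rmult_1_l, exp_plus, IH. simpl. ring.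
Qed.

Lemma pow_le_exp m y : 0 <= y -> y ^ m <= INR m ^ m * exp y.
Proof.
  intros Hy. destruct m as [|m].
  - simpl. pose proof (exp_ineq1_le y). lra.
  - set (k := INR (S m)).
    assert (Hk : 0 < k) by (apply lt_0_INR; lia).
    assert (H1 : 0 <= y / k <= exp (y / k)).
    { split; [apply Rdiv_le_0_compat; lra|]. pose proof (exp_ineq1_le (y / k)). lra. }
    assert (H2 : (y / k) ^ S m <= exp (y / k) ^ S m) by (apply pow_incr; lra).
    rewrite <- exp_INR_mul in H2. fold k in H2.
    replace (k * (y / k)) with y in H2 by (field; lra).
    replace (y ^ S m) with (k ^ S m * (y / k) ^ S m)
      by (rewrite <- Rpow_mult_distr; f_equal; field; lra).
    apply Rmult_le_compat_l; [apply pow_le; lra | exact H2].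
Qed.

Lemma pow_le_exp_scaled m y a : 0 <= y -> 0 < a ->
  y ^ m <= (INR m / a) ^ m * exp (a * y).
Proof.
  intros Hy Ha.
  pose proof (pow_le_exp m (a * y) ltac:(nra)) as H.
  rewrite Rpow_mult_distr in H.
  assert (Hp : 0 < a ^ m) by (apply pow_lt; lra).
  unfold Rdiv. rewrite Rpow_mult_distr, pow_inv.
  apply (Rmult_le_reg_l (a ^ m)); [exact Hp|].
  replace (a ^ m * (INR m ^ m * / a ^ m * exp (a * y))) with (INR m ^ m * exp (a * y))
    by (field; lra).
  exact H.
Qed.

Lemma exp_taylor1_remainder y : Rabs (exp y - 1 - y) <= y ^ 2 * exp (Rabs y).
Proof.
  pose proof (exp_ineq1_le y) as H1.
  pose proof (exp_ineq1_le (- y)) as H2.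
  pose proof (exp_pos y) as H3.
  assert (H4 : (1 - y) * exp y <= 1).
  { rewrite exp_Ropp in H2. apply (Rmult_le_compat_r (exp y)) in H2; [|lra].
    rewrite Rinv_l in H2 by lra. lra. }
  rewrite Rabs_right by lra.
  destruct (Rle_or_lt 0 y) as [Hy|Hy].
  - rewrite Rabs_right by lra. nra.
  - rewrite Rabs_left by lra. pose proof (exp_ineq1_le (- y)). nra.
Qed.

Lemma exp_decay_small g K eps : 0 < g -> 0 <= K -> 0 < eps ->
  exists M, 0 < M /\ forall x, M <= x -> K * exp (- (g * x)) < eps.
Proof.
  intros Hg HK He.
  set (l := ln (eps / (K + 1))).
  exists ((Rabs l + 1) / g). split.
  { apply Rdiv_lt_0_compat; [pose proof (Rabs_pos l); lra | exact Hg]. }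
  intros x Hx.
  assert (Hgx : Rabs l + 1 <= g * x).
  { apply (Rmult_le_compat_l g) in Hx; [|lra].
    replace (g * ((Rabs l + 1) / g)) with (Rabs l + 1) in Hx by (field; lra). exact Hx. }
  assert (Hlt : exp (- (g * x)) < eps / (K + 1)).
  { replace (eps / (K + 1)) with (exp l)
      by (unfold l; rewrite exp_ln; [reflexivity | apply Rdiv_lt_0_compat; lra]).
    apply exp_increasing. pose proof (Rle_abs (- l)) as Hl. rewrite Rabs_Ropp in Hl. lra. }
  pose proof (exp_pos (- (g * x))).
  apply (Rmult_lt_compat_l (K + 1)) in Hlt; [|lra].
  replace ((K + 1) * (eps / (K + 1))) with eps in Hlt by (field; lra).
  nra.
Qed.

Lemma exp_decay_small_nat g K eps : 0 < g -> 0 <= K -> 0 < eps ->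
  exists N : nat, forall x, INR N <= x -> K * exp (- (g * x)) < eps.
Proof.
  intros Hg HK He.
  destruct (exp_decay_small g K eps Hg HK He) as [M [_ HM]].
  destruct (INR_unbounded M) as [N HN].
  exists N. intros x Hx. apply HM. lra.
Qed.

Lemma ex_finite_lim_seq_of_exp_tail (u : nat -> R) K g : 0 < g -> 0 <= K ->
  (forall N n, (N <= n)%nat -> Rabs (u n - u N) <= K * exp (- (g * INR N))) ->
  ex_finite_lim_seq u.
Proof.
  intros Hg HK Hu. apply ex_lim_seq_cauchy_corr. intros eps.
  destruct (exp_decay_small_nat g (2 * K) eps Hg ltac:(lra) (cond_pos eps)) as [N HN].
  exists N. intros n m Hn Hm.
  specialize (HN (INR N) (Rle_refl _)).
  pose proof (Hu N n Hn). pose proof (Hu N m Hm).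
  replace (u n - u m) with ((u n - u N) - (u m - u N)) by ring.
  eapply Rle_lt_trans; [apply Rabs_triang|]. rewrite Rabs_Ropp. lra.
Qed.

Lemma is_lim_seq_between (u : nat -> R) (l lo hi : R) : is_lim_seq u l ->
  (exists N, forall m, (N <= m)%nat -> lo <= u m <= hi) -> lo <= l <= hi.
Proof.
  intros Hu [N HN].
  split.
  - apply (is_lim_seq_le_loc (fun _ => lo) u lo l); [|apply is_lim_seq_const|exact Hu].
    exists N. intros m Hm. apply HN, Hm.
  - apply (is_lim_seq_le_loc u (fun _ => hi) l hi); [|exact Hu|apply is_lim_seq_const].
    exists N. intros m Hm. apply HN, Hm.
Qed.

Lemma continuous_of_ex_derive (f : R -> R) x : ex_derive f x -> continuous f x.
Proof. intros H. apply (ex_derive_continuous (K := R_AbsRing) (V := R_NormedModule)). exact H. Qed.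

Lemma ex_RInt_of_continuous (f : R -> R) a b : (forall x, continuous f x) -> ex_RInt f a b.
Proof. intros Hf. apply (ex_RInt_continuous (V := R_CompleteNormedModule)). auto. Qed.

Lemma RInt_Chasles_continuous (f : R -> R) a b c : (forall x, continuous f x) ->
  RInt f a c = RInt f a b + RInt f b c.
Proof.
  intros Hf. symmetry.
  apply (RInt_Chasles (V := R_CompleteNormedModule)); apply ex_RInt_of_continuous, Hf.
Qed.

Lemma abs_RInt_le_RInt (f h : R -> R) a b : a <= b ->
  (forall x, continuous f x) -> (forall x, continuous h x) ->
  (forall x, a <= x <= b -> Rabs (f x) <= h x) ->
  Rabs (RInt f a b) <= RInt h a b.
Proof.
  intros Hab Hf Hh Hfh.
  assert (Habs : forall x, continuous (fun t => Rabs (f t)) x).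
  { intros x. apply (continuous_comp f Rabs); [apply Hf | apply continuous_Rabs]. }
  eapply Rle_trans; [apply abs_RInt_le; [exact Hab | apply ex_RInt_of_continuous, Hf]|].
  apply RInt_le; [exact Hab | apply ex_RInt_of_continuous, Habs
                 | apply ex_RInt_of_continuous, Hh |].
  intros x Hx. apply Hfh. lra.
Qed.

Lemma RInt_scal_exp K g a b : g <> 0 ->
  RInt (fun x => K * exp (g * x)) a b = K / g * (exp (g * b) - exp (g * a)).
Proof.
  intros Hg. apply is_RInt_unique.
  replace (K / g * (exp (g * b) - exp (g * a))) with
     (minus (K / g * exp (g * b)) (K / g * exp (g * a)))
    by (unfold minus, plus, opp; simpl; ring).
  apply (is_RInt_derive (V := R_CompleteNormedModule) (fun x => K / g * exp (g * x))).
  - intros x _. auto_derive; [exact I | field; exact Hg].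
  - intros x _. apply continuous_of_ex_derive. auto_derive. exact I.
Qed.

Record dominated (f : R -> R) (g K1 K2 : R) : Prop := {
  dominated_rate : 0 < g;
  dominated_K1 : 0 <= K1;
  dominated_K2 : 0 <= K2;
  dominated_cont : forall x, continuous f x;
  dominated_left : forall x, x <= 0 -> Rabs (f x) <= K1 * exp (g * x);
  dominated_right : forall x, 0 <= x -> Rabs (f x) <= K2 * exp (- (g * x)) }.

(* Limits along integer endpoints; [real] returns a junk value when the limit does not exist,
   so these are only used for [dominated] integrands. *)
Definition int_R (f : R -> R) : R := real (Lim_seq (fun m => RInt f (- INR m) (INR m))).
Definition int_to (f : R -> R) (L : R) : R := real (Lim_seq (fun m => RInt f (- INR m) L)).

Section Dominated.

Variables (f : R -> R) (g K1 K2 : R).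
Hypothesis Hf : dominated f g K1 K2.

Let Hg := dominated_rate _ _ _ _ Hf.
Let HK1 := dominated_K1 _ _ _ _ Hf.
Let HK2 := dominated_K2 _ _ _ _ Hf.
Let Hcont := dominated_cont _ _ _ _ Hf.

Lemma abs_RInt_left_tail a b : a <= b -> b <= 0 ->
  Rabs (RInt f a b) <= K1 / g * exp (g * b).
Proof.
  intros Hab Hb.
  eapply Rle_trans.
  - apply (abs_RInt_le_RInt f (fun x => K1 * exp (g * x))); [exact Hab | exact Hcont | |].
    + intros x. apply continuous_of_ex_derive. auto_derive. exact I.
    + intros x Hx. apply (dominated_left _ _ _ _ Hf). lra.
  - rewrite RInt_scal_exp by lra.
    pose proof (exp_pos (g * a)).
    assert (0 <= K1 / g) by (apply Rdiv_le_0_compat; lra).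
    nra.
Qed.

Lemma abs_RInt_right_tail a b : 0 <= a -> a <= b ->
  Rabs (RInt f a b) <= K2 / g * exp (- (g * a)).
Proof.
  intros Ha Hab.
  eapply Rle_trans.
  - apply (abs_RInt_le_RInt f (fun x => K2 * exp (- g * x))); [exact Hab | exact Hcont | |].
    + intros x. apply continuous_of_ex_derive. auto_derive. exact I.
    + intros x Hx. replace (- g * x) with (- (g * x)) by ring.
      apply (dominated_right _ _ _ _ Hf). lra.
  - rewrite RInt_scal_exp by lra.
    pose proof (exp_pos (- g * b)).
    assert (0 <= K2 / g) by (apply Rdiv_le_0_compat; lra).
    replace (K2 / - g * (exp (- g * b) - exp (- g * a))) with
      (K2 / g * exp (- (g * a)) - K2 / g * exp (- g * b))
      by (replace (- g * a) with (- (g * a)) by ring; field; lra).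
    nra.
Qed.

Lemma abs_RInt_outer_minus_inner a a' b' b :
  a <= a' -> a' <= 0 -> 0 <= b' -> b' <= b ->
  Rabs (RInt f a b - RInt f a' b') <= K1 / g * exp (g * a') + K2 / g * exp (- (g * b')).
Proof.
  intros H1 H2 H3 H4.
  rewrite (RInt_Chasles_continuous f a a' b), (RInt_Chasles_continuous f a' b' b) by exact Hcont.
  replace (RInt f a a' + (RInt f a' b' + RInt f b' b) - RInt f a' b')
    with (RInt f a a' + RInt f b' b) by ring.
  eapply Rle_trans; [apply Rabs_triang|].
  apply Rplus_le_compat; [apply abs_RInt_left_tail | apply abs_RInt_right_tail]; lra.
Qed.

Lemma is_lim_int_R : is_lim_seq (fun m => RInt f (- INR m) (INR m)) (int_R f).
Proof.
  apply Lim_seq_correct'.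
  apply (ex_finite_lim_seq_of_exp_tail _ ((K1 + K2) / g) g Hg);
    [apply Rdiv_le_0_compat; lra|].
  intros N n Hn.
  assert (INR N <= INR n) by (apply le_INR, Hn).
  pose proof (pos_INR N).
  eapply Rle_trans; [apply abs_RInt_outer_minus_inner; lra|].
  replace (g * - INR N) with (- (g * INR N)) by ring.
  right. field. lra.
Qed.

Lemma is_lim_int_to L : is_lim_seq (fun m => RInt f (- INR m) L) (int_to f L).
Proof.
  apply Lim_seq_correct'.
  apply (ex_finite_lim_seq_of_exp_tail _ (K1 / g) g Hg); [apply Rdiv_le_0_compat; lra|].
  intros N n Hn.
  assert (INR N <= INR n) by (apply le_INR, Hn).
  pose proof (pos_INR N).
  rewrite (RInt_Chasles_continuous f (- INR n) (- INR N) L) by exact Hcont.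
  rewrite Rplus_minus_r.
  replace (- (g * INR N)) with (g * - INR N) by ring.
  apply abs_RInt_left_tail; lra.
Qed.

Lemma int_R_bound a b : a <= 0 -> 0 <= b ->
  Rabs (int_R f - RInt f a b) <= K1 / g * exp (g * a) + K2 / g * exp (- (g * b)).
Proof.
  intros Ha Hb. apply Rabs_le_between.
  apply (is_lim_seq_between _ _ _ _ (is_lim_seq_minus' _ _ _ _ is_lim_int_R
           (is_lim_seq_const (RInt f a b)))).
  destruct (INR_unbounded (Rmax (- a) b)) as [N HN].
  exists N. intros m Hm.
  assert (INR N <= INR m) by (apply le_INR, Hm).
  pose proof (Rmax_l (- a) b). pose proof (Rmax_r (- a) b).
  apply Rabs_le_between, abs_RInt_outer_minus_inner; lra.
Qed.

Lemma int_to_bound a L : a <= 0 -> a <= L ->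
  Rabs (int_to f L - RInt f a L) <= K1 / g * exp (g * a).
Proof.
  intros Ha HaL. apply Rabs_le_between.
  apply (is_lim_seq_between _ _ _ _ (is_lim_seq_minus' _ _ _ _ (is_lim_int_to L)
           (is_lim_seq_const (RInt f a L)))).
  destruct (INR_unbounded (- a)) as [N HN].
  exists N. intros m Hm.
  assert (INR N <= INR m) by (apply le_INR, Hm).
  rewrite (RInt_Chasles_continuous f (- INR m) a L) by exact Hcont.
  rewrite Rplus_minus_r.
  apply Rabs_le_between, abs_RInt_left_tail; lra.
Qed.

Lemma int_to_split L : int_to f L = int_to f 0 + RInt f 0 L.
Proof.
  unfold int_to at 1.
  rewrite (is_lim_seq_unique _ (int_to f 0 + RInt f 0 L)); [reflexivity|].
  apply (is_lim_seq_ext (fun m => RInt f (- INR m) 0 + RInt f 0 L)).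
  - intros m. symmetry. apply RInt_Chasles_continuous, Hcont.
  - apply is_lim_seq_plus'; [apply is_lim_int_to | apply is_lim_seq_const].
Qed.

Lemma is_lim_int_R_minus_int_to L :
  is_lim_seq (fun m => RInt f L (INR m)) (int_R f - int_to f L).
Proof.
  apply (is_lim_seq_ext (fun m => RInt f (- INR m) (INR m) - RInt f (- INR m) L)).
  - intros m. rewrite (RInt_Chasles_continuous f (- INR m) L (INR m)) by exact Hcont.
    apply Rplus_minus_l.
  - apply is_lim_seq_minus'; [apply is_lim_int_R | apply is_lim_int_to].
Qed.

Lemma int_R_approx eps : 0 < eps ->
  exists M, 0 < M /\ forall a b, a <= - M -> M <= b -> Rabs (int_R f - RInt f a b) < eps.
Proof.
  intros He.
  destruct (exp_decay_small g ((K1 + K2) / g) eps Hg) as [M [HM HMx]];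
    [apply Rdiv_le_0_compat; lra | exact He |].
  exists M. split; [exact HM|]. intros a b Ha Hb.
  eapply Rle_lt_trans; [apply int_R_bound; lra|].
  assert (exp (g * a) <= exp (- (g * M))) by (apply exp_le_exp_compat; nra).
  assert (exp (- (g * b)) <= exp (- (g * M))) by (apply exp_le_exp_compat; nra).
  specialize (HMx M (Rle_refl _)).
  assert (0 <= K1 / g) by (apply Rdiv_le_0_compat; lra).
  assert (0 <= K2 / g) by (apply Rdiv_le_0_compat; lra).
  replace ((K1 + K2) / g) with (K1 / g + K2 / g) in HMx by (field; lra).
  nra.
Qed.

End Dominated.

Definition exp_decaying (f : R -> R) : Prop := exists g K1 K2, dominated f g K1 K2.

Lemma int_R_minus_scal (f1 f2 f3 : R -> R) h :
  exp_decaying f1 -> exp_decaying f2 -> exp_decaying f3 ->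
  int_R (fun x => f1 x - f2 x - h * f3 x) = int_R f1 - int_R f2 - h * int_R f3.
Proof.
  intros [g1 [a1 [b1 D1]]] [g2 [a2 [b2 D2]]] [g3 [a3 [b3 D3]]].
  assert (Hex : forall (f : R -> R) g a b, dominated f g a b -> forall u v, ex_RInt f u v)
    by (intros f g a b D u v; apply ex_RInt_of_continuous, (dominated_cont _ _ _ _ D)).
  unfold int_R at 1.
  rewrite (is_lim_seq_unique _ (int_R f1 - int_R f2 - h * int_R f3)); [reflexivity|].
  apply (is_lim_seq_ext (fun m => RInt f1 (- INR m) (INR m) - RInt f2 (- INR m) (INR m)
                                   - h * RInt f3 (- INR m) (INR m))).
  - intros m. symmetry.
    change (RInt (fun x => minus (minus (f1 x) (f2 x)) (scal h (f3 x))) (- INR m) (INR m) =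
      minus (minus (RInt f1 (- INR m) (INR m)) (RInt f2 (- INR m) (INR m)))
            (scal h (RInt f3 (- INR m) (INR m)))).
    rewrite (RInt_minus (V := R_CompleteNormedModule)), (RInt_minus (V := R_CompleteNormedModule)),
      (RInt_scal (V := R_CompleteNormedModule)); try reflexivity; eauto.
    + apply (ex_RInt_minus (V := R_CompleteNormedModule)); eauto.
    + apply (ex_RInt_scal (V := R_CompleteNormedModule)); eauto.
  - apply is_lim_seq_minus'; [apply is_lim_seq_minus'|].
    + apply (is_lim_int_R _ _ _ _ D1).
    + apply (is_lim_int_R _ _ _ _ D2).
    + apply (is_lim_seq_scal_l _ h (int_R f3)), (is_lim_int_R _ _ _ _ D3).
Qed.

Lemma pow_exp_le_exp_nonpos j s g x : 0 < s -> g <= s / 2 -> x <= 0 ->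
  Rabs x ^ j * exp (s * x) <= (INR j / (s / 2)) ^ j * exp (g * x).
Proof.
  intros Hs Hg Hx.
  rewrite (Rabs_left1 x Hx).
  pose proof (pow_le_exp_scaled j (- x) (s / 2) ltac:(lra) ltac:(lra)) as Hp.
  assert (E : exp (s / 2 * - x) * exp (s * x) = exp (s / 2 * x))
    by (rewrite <- exp_plus; f_equal; field).
  pose proof (exp_pos (s * x)).
  eapply Rle_trans; [apply Rmult_le_compat_r; [lra | exact Hp]|].
  rewrite Rmult_assoc, E. apply Rmult_le_compat_l.
  - apply pow_le, Rdiv_le_0_compat; [apply pos_INR | lra].
  - apply exp_le_exp_compat. nra.
Qed.

(* Uses [e^(e^x) >= e^(M x) / M^M]. *)
Lemma pow_exp_exp_le_exp_nonneg j M s2 g x : s2 + 2 <= INR M -> g <= 1 -> 0 <= x ->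
  x ^ j * exp (s2 * x - exp x) <= INR j ^ j * INR M ^ M * exp (- (g * x)).
Proof.
  intros HM Hg Hx.
  pose proof (pow_le_exp j x Hx) as Hp.
  pose proof (pow_le_exp M (exp x) (Rlt_le _ _ (exp_pos x))) as Hq.
  rewrite <- exp_INR_mul in Hq.
  assert (E : exp (s2 * x - exp x) <= INR M ^ M * exp (s2 * x - INR M * x)).
  { unfold Rminus. rewrite !exp_plus, !exp_Ropp.
    pose proof (exp_pos (INR M * x)). pose proof (exp_pos (exp x)). pose proof (exp_pos (s2 * x)).
    apply (Rmult_le_reg_r (exp (exp x) * exp (INR M * x))); [nra|].
    replace (exp (s2 * x) * / exp (exp x) * (exp (exp x) * exp (INR M * x)))
      with (exp (s2 * x) * exp (INR M * x)) by (field; lra).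
    replace (INR M ^ M * (exp (s2 * x) * / exp (INR M * x)) * (exp (exp x) * exp (INR M * x)))
      with (exp (s2 * x) * (INR M ^ M * exp (exp x))) by (field; lra).
    apply Rmult_le_compat_l; lra. }
  assert (E2 : exp x * exp (s2 * x - INR M * x) <= exp (- (g * x)))
    by (rewrite <- exp_plus; apply exp_le_exp_compat; nra).
  pose proof (pow_le x j Hx). pose proof (pow_le (INR M) M (pos_INR M)).
  pose proof (pow_le (INR j) j (pos_INR j)). pose proof (exp_pos (s2 * x - INR M * x)).
  eapply Rle_trans; [apply Rmult_le_compat_l; [lra | exact E]|].
  eapply Rle_trans.
  { apply Rmult_le_compat_r; [apply Rmult_le_pos; [lra | left; apply exp_pos] | exact Hp]. }
  replace (INR j ^ j * exp x * (INR M ^ M * exp (s2 * x - INR M * x))) with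
    (INR j ^ j * INR M ^ M * (exp x * exp (s2 * x - INR M * x))) by ring.
  apply Rmult_le_compat_l; [nra | exact E2].
Qed.

Lemma dominated_of_gamma_bounds j s1 s2 : 0 < s1 ->
  exists g K1 K2, 0 < g /\ 0 <= K1 /\ 0 <= K2 /\
   forall c (f : R -> R), 0 <= c -> (forall x, continuous f x) ->
   (forall x, x <= 0 -> Rabs (f x) <= c * Rabs x ^ j * exp (s1 * x)) ->
   (forall x, 0 <= x -> Rabs (f x) <= c * x ^ j * exp (s2 * x - exp x)) ->
   dominated f g (c * K1) (c * K2).
Proof.
  intros Hs1.
  destruct (INR_unbounded (s2 + 2)) as [M HM].
  set (g := Rmin (s1 / 2) 1).
  assert (Hg : 0 < g) by (apply Rmin_pos; lra).
  exists g, ((INR j / (s1 / 2)) ^ j), (INR j ^ j * INR M ^ M).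
  assert (P1 : 0 <= (INR j / (s1 / 2)) ^ j)
    by (apply pow_le, Rdiv_le_0_compat; [apply pos_INR | lra]).
  assert (P2 : 0 <= INR j ^ j * INR M ^ M)
    by (apply Rmult_le_pos; apply pow_le, pos_INR).
  split; [exact Hg | split; [exact P1 | split; [exact P2 |]]].
  intros c f Hc0 Hc Hl Hr. split; try assumption; try nra.
  - intros x Hx. eapply Rle_trans; [apply Hl, Hx|]. rewrite !Rmult_assoc.
    apply Rmult_le_compat_l; [exact Hc0|].
    apply pow_exp_le_exp_nonpos; [lra | apply Rmin_l | exact Hx].
  - intros x Hx. eapply Rle_trans; [apply Hr, Hx|]. rewrite !Rmult_assoc.
    apply Rmult_le_compat_l; [exact Hc0|]. rewrite <- Rmult_assoc.
    apply pow_exp_exp_le_exp_nonneg; [lra | apply Rmin_r | exact Hx].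
Qed.

Definition gamma_integrand (j : nat) (s x : R) : R := x ^ j * exp (s * x - exp x).

Definition Gamma_deriv (j : nat) (s : R) : R := int_R (gamma_integrand j s).

Lemma continuous_gamma_integrand j s x : continuous (gamma_integrand j s) x.
Proof. apply continuous_of_ex_derive. unfold gamma_integrand. auto_derive. exact I. Qed.

Lemma abs_gamma_integrand j s x :
  Rabs (gamma_integrand j s x) = Rabs x ^ j * exp (s * x - exp x).
Proof.
  unfold gamma_integrand. rewrite Rabs_mult, RPow_abs.
  rewrite (Rabs_right (exp _)) by (left; apply exp_pos). reflexivity.
Qed.

Lemma exp_decaying_gamma_integrand j s : 0 < s -> exp_decaying (gamma_integrand j s).
Proof.
  intros Hs.
  destruct (dominated_of_gamma_bounds j s s Hs) as [g [K1 [K2 [_ [_ [_ H]]]]]].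
  exists g, (1 * K1), (1 * K2).
  apply H; [lra | apply continuous_gamma_integrand | |]; intros x Hx;
    rewrite abs_gamma_integrand, Rmult_1_l.
  - apply Rmult_le_compat_l; [apply pow_le, Rabs_pos|].
    apply exp_le_exp_compat. pose proof (exp_pos x). lra.
  - rewrite Rabs_right by lra. lra.
Qed.

Lemma abs_gamma_remainder_le j s h x : Rabs h <= s / 4 ->
  Rabs (gamma_integrand j s x * (exp (h * x) - 1 - h * x))
    <= h ^ 2 * Rabs x ^ (j + 2) * exp (s * x - exp x + s / 4 * Rabs x).
Proof.
  intros Hh.
  rewrite Rabs_mult, abs_gamma_integrand.
  pose proof (exp_taylor1_remainder (h * x)) as Hr.
  assert (Hhx : exp (Rabs (h * x)) <= exp (s / 4 * Rabs x)).
  { apply exp_le_exp_compat. rewrite Rabs_mult.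
    apply Rmult_le_compat_r; [apply Rabs_pos | exact Hh]. }
  rewrite exp_plus, pow_add.
  replace ((h * x) ^ 2) with (h ^ 2 * Rabs x ^ 2) in Hr
    by (rewrite pow2_abs; ring).
  pose proof (pow_le (Rabs x) j (Rabs_pos x)). pose proof (pow2_ge_0 h).
  pose proof (pow2_ge_0 (Rabs x)). pose proof (exp_pos (s * x - exp x)).
  pose proof (exp_pos (Rabs (h * x))).
  replace (h ^ 2 * (Rabs x ^ j * Rabs x ^ 2) * (exp (s * x - exp x) * exp (s / 4 * Rabs x)))
    with (Rabs x ^ j * exp (s * x - exp x) * (h ^ 2 * Rabs x ^ 2 * exp (s / 4 * Rabs x))) by ring.
  apply Rmult_le_compat_l; [apply Rmult_le_pos; lra|].
  eapply Rle_trans; [exact Hr|].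
  apply Rmult_le_compat_l; [apply Rmult_le_pos; lra | exact Hhx].
Qed.

Lemma Gamma_deriv_taylor j s : 0 < s -> exists B, 0 <= B /\ forall h, Rabs h <= s / 4 ->
  Rabs (Gamma_deriv j (s + h) - Gamma_deriv j s - h * Gamma_deriv (S j) s) <= h ^ 2 * B.
Proof.
  intros Hs.
  destruct (dominated_of_gamma_bounds (j + 2) (3 * s / 4) (5 * s / 4) ltac:(lra))
    as [g [K1 [K2 [Hg [HK1 [HK2 HD]]]]]].
  exists ((K1 + K2) / g). split; [apply Rdiv_le_0_compat; lra|].
  intros h Hh.
  set (r := fun x => gamma_integrand j (s + h) x - gamma_integrand j s x
                     - h * gamma_integrand (S j) s x).
  assert (Hr : forall x, r x = gamma_integrand j s x * (exp (h * x) - 1 - h * x)).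
  { intros x. unfold r, gamma_integrand. simpl pow.
    replace ((s + h) * x - exp x) with ((s * x - exp x) + h * x) by ring.
    rewrite exp_plus. ring. }
  assert (Dr : dominated r g (h ^ 2 * K1) (h ^ 2 * K2)).
  { apply HD; [apply pow2_ge_0 | |  |]; intros x.
    - apply continuous_of_ex_derive. unfold r, gamma_integrand. auto_derive. exact I.
    - intros Hx. rewrite Hr. eapply Rle_trans; [apply abs_gamma_remainder_le, Hh|].
      apply Rmult_le_compat_l; [apply Rmult_le_pos; [apply pow2_ge_0 | apply pow_le, Rabs_pos]|].
      apply exp_le_exp_compat. rewrite Rabs_left1 by exact Hx. pose proof (exp_pos x). lra.
    - intros Hx. rewrite Hr. eapply Rle_trans; [apply abs_gamma_remainder_le, Hh|].
      rewrite Rabs_right by lra. right. f_equal. f_equal. lra. }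
  assert (Hs' : 0 < s + h) by (apply Rabs_le_between in Hh; lra).
  unfold Gamma_deriv.
  rewrite <- (int_R_minus_scal _ _ _ h); try apply exp_decaying_gamma_integrand; try lra.
  fold r.
  pose proof (int_R_bound _ _ _ _ Dr 0 0 (Rle_refl _) (Rle_refl _)) as Hb.
  rewrite RInt_point, Rminus_0_r, Rmult_0_r, Ropp_0, exp_0 in Hb.
  eapply Rle_trans; [exact Hb|]. right. field. lra.
Qed.

Lemma derivable_pt_lim_of_quadratic_remainder (F : R -> R) s l delta B :
  0 < delta -> 0 <= B ->
  (forall h, Rabs h <= delta -> Rabs (F (s + h) - F s - h * l) <= h ^ 2 * B) ->
  derivable_pt_lim F s l.
Proof.
  intros Hd HB HF eps Heps.
  assert (Hm : 0 < Rmin delta (eps / (B + 1)))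
    by (apply Rmin_pos; [lra | apply Rdiv_lt_0_compat; lra]).
  exists (mkposreal _ Hm). intros h Hh0 Hh. simpl in Hh.
  pose proof (Rmin_l delta (eps / (B + 1))). pose proof (Rmin_r delta (eps / (B + 1))).
  specialize (HF h ltac:(lra)).
  assert (Hpos : 0 < Rabs h) by (apply Rabs_pos_lt, Hh0).
  replace ((F (s + h) - F s) / h - l) with ((F (s + h) - F s - h * l) / h) by (field; exact Hh0).
  rewrite Rabs_div by exact Hh0.
  apply (Rmult_lt_reg_r (Rabs h)); [exact Hpos|].
  unfold Rdiv. rewrite Rmult_assoc, Rinv_l, Rmult_1_r by lra.
  rewrite <- (pow2_abs h) in HF.
  assert (Rabs h * B < eps).
  { apply (Rle_lt_trans _ (eps / (B + 1) * B)); [apply Rmult_le_compat_r; lra|].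
    apply (Rmult_lt_reg_r (B + 1)); [lra|].
    replace (eps / (B + 1) * B * (B + 1)) with (eps * B) by (field; lra). nra. }
  nra.
Qed.

Lemma derivable_pt_lim_Gamma_deriv j s : 0 < s ->
  derivable_pt_lim (Gamma_deriv j) s (Gamma_deriv (S j) s).
Proof.
  intros Hs. destruct (Gamma_deriv_taylor j s Hs) as [B [HB Hk]].
  apply (derivable_pt_lim_of_quadratic_remainder _ _ _ (s / 4) B); [lra | exact HB | exact Hk].
Qed.

Lemma RInt_Gamma_integrand_exp s a b : 0 < a -> a <= b ->
  RInt (fun t => Rpower t (s - 1) * exp (- t)) a b = RInt (gamma_integrand 0 s) (ln a) (ln b).
Proof.
  intros Ha Hab.
  assert (HF : forall z, 0 < z -> continuous (fun t => Rpower t (s - 1) * exp (- t)) z).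
  { intros z Hz. apply continuous_of_ex_derive. unfold Rpower. auto_derive. exact Hz. }
  assert (H := is_RInt_comp (V := R_CompleteNormedModule)
                 (fun t => Rpower t (s - 1) * exp (- t)) exp exp (ln a) (ln b)).
  rewrite !exp_ln in H by lra.
  symmetry. apply is_RInt_unique.
  eapply is_RInt_ext; [|apply H].
  - intros x _. unfold gamma_integrand, Rpower. rewrite ln_exp. simpl pow.
    change (scal (exp x) (exp ((s - 1) * x) * exp (- exp x))) with
      (exp x * (exp ((s - 1) * x) * exp (- exp x))).
    rewrite <- !exp_plus, Rmult_1_l. f_equal. ring.
  - intros x _. apply HF, exp_pos.
  - intros x _. split; [apply is_derive_exp|].
    apply continuous_of_ex_derive. auto_derive. exact I.
Qed.

Lemma improper_int_Gamma_deriv_0 s : 0 < s ->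
  improper_int_0_inf (fun t => Rpower t (s - 1) * exp (- t)) (Gamma_deriv 0 s).
Proof.
  intros Hs eps Heps.
  destruct (exp_decaying_gamma_integrand 0 s Hs) as [g [K1 [K2 HD]]].
  destruct (int_R_approx _ _ _ _ HD eps Heps) as [M [HM HA]].
  assert (HMM : exp (- M) < exp M) by (apply exp_increasing; lra).
  exists (exp (- M)), (exp M). split; [apply exp_pos | split; [exact HMM|]].
  intros a b Ha Ha0 Hb.
  assert (Hex : ex_RInt (fun t => Rpower t (s - 1) * exp (- t)) a b).
  { apply (ex_RInt_continuous (V := R_CompleteNormedModule)). intros z Hz.
    rewrite Rmin_left in Hz by lra.
    apply continuous_of_ex_derive. unfold Rpower. auto_derive. lra. }
  exists (ex_RInt_Reals_0 _ _ _ Hex).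
  rewrite <- RInt_Reals, RInt_Gamma_integrand_exp by lra.
  rewrite Rabs_minus_sym. apply HA.
  - rewrite <- (ln_exp (- M)). apply ln_le; lra.
  - rewrite <- (ln_exp M). apply ln_le; [apply exp_pos | exact Hb].
Qed.

Lemma GammaDer_Gamma_deriv j : GammaDer j (Gamma_deriv j).
Proof.
  induction j as [|j IH]; simpl.
  - apply improper_int_Gamma_deriv_0.
  - exists (Gamma_deriv j). split; [exact IH | apply derivable_pt_lim_Gamma_deriv].
Qed.

Definition mean0 (phi : R -> R) (c : R) : R := RInt (fun x => phi (c * (1 - x))) 0 1.

Lemma continuous_comp_affine (phi : R -> R) c :
  (forall x, continuous phi x) -> forall x, continuous (fun x => phi (c * (1 - x))) x.
Proof.
  intros Hphi x. apply (continuous_comp (fun x => c * (1 - x)) phi); [|apply Hphi].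
  apply continuous_of_ex_derive. auto_derive. exact I.
Qed.

Lemma mean0_eq (phi : R -> R) c : (forall x, continuous phi x) -> c <> 0 ->
  mean0 phi c = RInt phi 0 c / c.
Proof.
  intros Hphi Hc.
  assert (H := is_RInt_comp_lin (V := R_CompleteNormedModule) phi (- c) c 0 1 (RInt phi c 0)).
  replace (- c * 0 + c) with c in H by ring.
  replace (- c * 1 + c) with 0 in H by ring.
  assert (E : RInt (fun y => scal (- c) (phi (- c * y + c))) 0 1 = RInt phi c 0).
  { apply is_RInt_unique, H, (RInt_correct (V := R_CompleteNormedModule)).
    apply ex_RInt_of_continuous, Hphi. }
  rewrite (RInt_ext _ (fun y => scal (- c) (phi (c * (1 - y))))) in E
    by (intros x _; do 2 f_equal; ring).
  rewrite (RInt_scal (V := R_CompleteNormedModule)) in E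
    by (apply ex_RInt_of_continuous, continuous_comp_affine, Hphi).
  rewrite <- (opp_RInt_swap (V := R_CompleteNormedModule) phi 0 c) in E
    by (apply ex_RInt_of_continuous, Hphi).
  change (- c * mean0 phi c = - RInt phi 0 c) in E.
  apply (Rmult_eq_reg_l (- c)); [|lra].
  rewrite E. field. exact Hc.
Qed.

Lemma continuous_RInt_0 (phi : R -> R) : (forall x, continuous phi x) ->
  forall c, continuous (fun y => RInt phi 0 y) c.
Proof.
  intros Hphi c. apply (continuous_RInt_1 phi 0 c (fun y => RInt phi 0 y)).
  apply filter_forall. intros z. apply (RInt_correct (V := R_CompleteNormedModule)).
  apply ex_RInt_of_continuous, Hphi.
Qed.

Lemma continuous_mean0_at_0 (phi : R -> R) : (forall x, continuous phi x) ->
  continuous (mean0 phi) 0.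
Proof.
  intros Hphi. apply filterlim_locally. intros eps.
  assert (He2 : 0 < eps / 2) by (pose proof (cond_pos eps); lra).
  destruct (proj1 (filterlim_locally (F := locally 0) phi (phi 0)) (Hphi 0) (mkposreal _ He2))
    as [del Hdel].
  exists del. intros y Hy. change (Rabs (mean0 phi y - mean0 phi 0) < eps).
  change (Rabs (y - 0) < del) in Hy. rewrite Rminus_0_r in Hy.
  assert (E0 : mean0 phi 0 = phi 0).
  { unfold mean0. rewrite (RInt_ext _ (fun _ => phi 0)) by (intros x _; f_equal; ring).
    rewrite RInt_const. change ((1 - 0) * phi 0 = phi 0). ring. }
  rewrite E0. unfold mean0.
  assert (Hex := ex_RInt_of_continuous _ 0 1 (continuous_comp_affine phi y Hphi)).
  assert (E : RInt (fun x => phi (y * (1 - x)) - phi 0) 0 1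
              = RInt (fun x => phi (y * (1 - x))) 0 1 - phi 0).
  { transitivity (minus (RInt (fun x => phi (y * (1 - x))) 0 1) (RInt (fun _ => phi 0) 0 1)).
    - apply (RInt_minus (V := R_CompleteNormedModule)); [exact Hex|].
      apply (ex_RInt_const (V := R_CompleteNormedModule)).
    - rewrite RInt_const. change (RInt (fun x => phi (y * (1 - x))) 0 1 - (1 - 0) * phi 0
        = RInt (fun x => phi (y * (1 - x))) 0 1 - phi 0). ring. }
  rewrite <- E.
  assert (Hb : forall x, 0 <= x <= 1 -> Rabs (phi (y * (1 - x)) - phi 0) < eps / 2).
  { intros x Hx. apply (Hdel (y * (1 - x))). change (Rabs (y * (1 - x) - 0) < del).
    rewrite Rminus_0_r, Rabs_mult, (Rabs_right (1 - x)) by lra.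
    pose proof (Rabs_pos y). pose proof (cond_pos del). nra. }
  apply (Rle_lt_trans _ ((1 - 0) * (eps / 2))); [|pose proof (cond_pos eps); lra].
  apply abs_RInt_le_const; [lra | |].
  - apply (ex_RInt_minus (V := R_CompleteNormedModule)); [exact Hex|].
    apply (ex_RInt_const (V := R_CompleteNormedModule)).
  - intros x Hx.
    apply Rlt_le, Hb. lra.
Qed.

Lemma continuous_mean0 (phi : R -> R) : (forall x, continuous phi x) ->
  forall c, continuous (mean0 phi) c.
Proof.
  intros Hphi c. destruct (Req_dec c 0) as [->|Hc]; [apply continuous_mean0_at_0, Hphi|].
  apply (continuous_ext_loc _ (fun y => RInt phi 0 y * / y)).
  - assert (Hp : 0 < Rabs c / 2) by (pose proof (Rabs_pos_lt c Hc); lra).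
    exists (mkposreal _ Hp). intros y Hy. change (Rabs (y - c) < Rabs c / 2) in Hy.
    rewrite mean0_eq by (try exact Hphi; intros ->; rewrite Rminus_0_l, Rabs_Ropp in Hy; lra).
    reflexivity.
  - apply (continuous_mult (fun y => RInt phi 0 y) Rinv);
      [apply continuous_RInt_0, Hphi | apply continuous_Rinv, Hc].
Qed.

Lemma continuous_iter_mean0 (phi : R -> R) k : (forall x, continuous phi x) ->
  forall c, continuous (Nat.iter k mean0 phi) c.
Proof.
  intros Hphi. induction k as [|k IH]; simpl; [exact Hphi|].
  apply continuous_mean0, IH.
Qed.

Lemma iter_int_prod_one_minus (phi : R -> R) k c : (forall x, continuous phi x) ->
  iter_int k (fun xs => phi (c * prod_one_minus xs)) (Nat.iter k mean0 phi c).
Proof.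
  intros Hphi. revert c. induction k as [|k IH]; intros c; simpl.
  - unfold prod_one_minus. simpl. rewrite Rmult_1_r. reflexivity.
  - exists (fun x => Nat.iter k mean0 phi (c * (1 - x))). split.
    + intros x _.
      replace (fun xs => phi (c * ((1 - x) * prod_one_minus xs)))
        with (fun xs => phi (c * (1 - x) * prod_one_minus xs))
        by (apply functional_extensionality; intros xs; rewrite Rmult_assoc; reflexivity).
      apply IH.
    + assert (Hex : ex_RInt (fun x => Nat.iter k mean0 phi (c * (1 - x))) 0 1)
        by (apply ex_RInt_of_continuous, continuous_comp_affine, continuous_iter_mean0, Hphi).
      exists (ex_RInt_Reals_0 _ _ _ Hex). rewrite <- RInt_Reals. reflexivity.
Qed.

Definition pow_div_fact (m : nat) (L : R) : R := L ^ m / INR (fact m).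

Definition expansion (k : nat) (L : R) (a : nat -> R) : R :=
  sum_f_R0 (fun i => pow_div_fact (k - i) L * pow_div_fact i (-1) * a i) k.

Definition lower_Gamma_deriv (i : nat) (s L : R) : R := int_to (gamma_integrand i s) L.

Definition lower_expansion (s : R) (k : nat) (L : R) : R :=
  expansion k L (fun i => lower_Gamma_deriv i s L).

Lemma INR_fact_pos m : 0 < INR (fact m).
Proof. apply lt_0_INR, lt_O_fact. Qed.

Lemma is_derive_pow_div_fact m L :
  is_derive (pow_div_fact m) L (match m with O => 0 | S m' => pow_div_fact m' L end).
Proof.
  unfold pow_div_fact. destruct m as [|m].
  - simpl. apply (is_derive_ext (fun _ => 1 / 1)); [intros; simpl; field|].
    apply (is_derive_const (K := R_AbsRing) (V := R_NormedModule)).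
  - auto_derive; [exact I|].
    change (match m with 0%nat => 1 | S _ => INR m + 1 end) with (INR (S m)).
    change (fact m + m * fact m)%nat with (fact (S m)).
    rewrite fact_simpl, mult_INR.
    pose proof (INR_fact_pos m). pose proof (pos_INR m). rewrite S_INR.
    field. lra.
Qed.

Lemma sum_pow_div_fact_binomial_zero k L : (1 <= k)%nat ->
  sum_f_R0 (fun i => pow_div_fact (k - i) L * pow_div_fact i (-1) * L ^ i) k = 0.
Proof.
  intros Hk.
  pose proof (binomial (- L) L k) as B.
  replace (- L + L) with 0 in B by ring. rewrite pow_i in B by lia.
  apply (Rmult_eq_reg_l (INR (fact k))); [|apply Rgt_not_eq, INR_fact_pos].
  rewrite Rmult_0_r, B, scal_sum. apply sum_eq. intros i Hi.
  unfold pow_div_fact, Binomial.C. replace (- L) with (-1 * L) by ring. rewrite Rpow_mult_distr.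
  pose proof (INR_fact_pos k). pose proof (INR_fact_pos i). pose proof (INR_fact_pos (k - i)).
  field. lra.
Qed.

Lemma is_derive_sum (F F' : nat -> R -> R) n x :
  (forall i, (i <= n)%nat -> is_derive (F i) x (F' i x)) ->
  is_derive (fun y => sum_f_R0 (fun i => F i y) n) x (sum_f_R0 (fun i => F' i x) n).
Proof.
  intros H. induction n as [|n IH]; simpl; [apply H; lia|].
  apply (is_derive_plus (K := R_AbsRing) (V := R_NormedModule));
    [apply IH; intros; apply H | apply H]; lia.
Qed.

Lemma is_derive_lower_Gamma_deriv i s L : 0 < s ->
  is_derive (lower_Gamma_deriv i s) L (gamma_integrand i s L).
Proof.
  intros Hs.
  destruct (exp_decaying_gamma_integrand i s Hs) as [g [K1 [K2 HD]]].
  apply (is_derive_ext (fun L => lower_Gamma_deriv i s 0 + RInt (gamma_integrand i s) 0 L)).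
  { intros t. unfold lower_Gamma_deriv. symmetry. apply (int_to_split _ _ _ _ HD). }
  rewrite <- (Rplus_0_l (gamma_integrand i s L)).
  apply (is_derive_plus (K := R_AbsRing) (V := R_NormedModule));
    [apply (is_derive_const (K := R_AbsRing) (V := R_NormedModule))|].
  apply (is_derive_RInt _ (fun b => RInt (gamma_integrand i s) 0 b) 0 L).
  - apply filter_forall. intros b. apply (RInt_correct (V := R_CompleteNormedModule)).
    apply ex_RInt_of_continuous, continuous_gamma_integrand.
  - apply continuous_gamma_integrand.
Qed.

Lemma lower_expansion_0 s L : lower_expansion s 0 L = lower_Gamma_deriv 0 s L.
Proof. unfold lower_expansion, expansion, pow_div_fact. simpl. field. Qed.

(* The terms in which [lower_Gamma_deriv] is differentiated cancel by the binomial theorem. *)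
Lemma is_derive_lower_expansion s k L : 0 < s ->
  is_derive (lower_expansion s (S k)) L (lower_expansion s k L).
Proof.
  intros Hs. unfold lower_expansion, expansion.
  set (D := fun m L => match m with O => 0 | S m' => pow_div_fact m' L end).
  assert (Hder := is_derive_sum
     (fun i y => pow_div_fact (S k - i) y * pow_div_fact i (-1) * lower_Gamma_deriv i s y)
     (fun i x => D (S k - i)%nat x * pow_div_fact i (-1) * lower_Gamma_deriv i s x
                 + pow_div_fact (S k - i) x * pow_div_fact i (-1) * gamma_integrand i s x)
     (S k) L).
  eapply is_derive_ext; [intros t; reflexivity|].
  replace (sum_f_R0 _ k) with
    (sum_f_R0 (fun i => D (S k - i)%nat L * pow_div_fact i (-1) * lower_Gamma_deriv i s L
           + pow_div_fact (S k - i) L * pow_div_fact i (-1) * gamma_integrand i s L) (S k)).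
  { apply Hder. intros i _.
    apply (is_derive_mult (K := R_AbsRing)
             (fun y => pow_div_fact (S k - i) y * pow_div_fact i (-1)) (lower_Gamma_deriv i s));
      [| apply is_derive_lower_Gamma_deriv, Hs | intros; apply Rmult_comm].
    replace (D (S k - i)%nat L * pow_div_fact i (-1))
      with (D (S k - i)%nat L * pow_div_fact i (-1) + pow_div_fact (S k - i) L * 0) by ring.
    apply (is_derive_mult (K := R_AbsRing) (pow_div_fact (S k - i)) (fun _ => pow_div_fact i (-1)));
      [apply is_derive_pow_div_fact
      | apply (is_derive_const (K := R_AbsRing) (V := R_NormedModule)) | intros; apply Rmult_comm]. }
  rewrite sum_plus.
  replace (sum_f_R0 (fun i => pow_div_fact (S k - i) L * pow_div_fact i (-1)
                              * gamma_integrand i s L) (S k)) with 0.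
  2:{ rewrite <- (Rmult_0_l (exp (s * L - exp L))).
      rewrite <- (sum_pow_div_fact_binomial_zero (S k) L) by lia.
      rewrite Rmult_comm, scal_sum. apply sum_eq. intros i _. unfold gamma_integrand. ring. }
  rewrite Rplus_0_r, tech5, Nat.sub_diag. simpl (D 0%nat L). rewrite !Rmult_0_l, Rplus_0_r.
  apply sum_eq. intros i Hi. replace (S k - i)%nat with (S (k - i)) by lia. reflexivity.
Qed.

Definition vanishes_at_minfty (F : R -> R) : Prop :=
  forall eps, 0 < eps -> exists M, forall L, L <= - M -> Rabs (F L) < eps.

Lemma vanishes_at_minfty_plus F1 F2 : vanishes_at_minfty F1 -> vanishes_at_minfty F2 ->
  vanishes_at_minfty (fun L => F1 L + F2 L).
Proof.
  intros H1 H2 eps He.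
  destruct (H1 (eps / 2) ltac:(lra)) as [M1 HM1]. destruct (H2 (eps / 2) ltac:(lra)) as [M2 HM2].
  exists (Rmax M1 M2). intros L HL. pose proof (Rmax_l M1 M2). pose proof (Rmax_r M1 M2).
  specialize (HM1 L ltac:(lra)). specialize (HM2 L ltac:(lra)).
  eapply Rle_lt_trans; [apply Rabs_triang | lra].
Qed.

Lemma vanishes_at_minfty_scal K F : vanishes_at_minfty F -> vanishes_at_minfty (fun L => K * F L).
Proof.
  intros H eps He.
  destruct (H (eps / (Rabs K + 1))) as [M HM];
    [apply Rdiv_lt_0_compat; [exact He | pose proof (Rabs_pos K); lra]|].
  exists M. intros L HL. rewrite Rabs_mult. specialize (HM L HL).
  pose proof (Rabs_pos K). pose proof (Rabs_pos (F L)).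
  apply (Rmult_lt_compat_l (Rabs K + 1)) in HM; [|lra].
  replace ((Rabs K + 1) * (eps / (Rabs K + 1))) with eps in HM by (field; lra).
  nra.
Qed.

Lemma vanishes_at_minfty_sum (F : nat -> R -> R) n :
  (forall i, (i <= n)%nat -> vanishes_at_minfty (F i)) ->
  vanishes_at_minfty (fun L => sum_f_R0 (fun i => F i L) n).
Proof.
  intros H. induction n as [|n IH]; simpl; [apply H; lia|].
  apply vanishes_at_minfty_plus; [apply IH; intros; apply H | apply H]; lia.
Qed.

Lemma vanishes_at_minfty_pow_lower_Gamma_deriv m i s : 0 < s ->
  vanishes_at_minfty (fun L => L ^ m * lower_Gamma_deriv i s L).
Proof.
  intros Hs eps He.
  destruct (exp_decaying_gamma_integrand i s Hs) as [g [K1 [K2 HD]]].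
  pose proof (dominated_rate _ _ _ _ HD) as Hg. pose proof (dominated_K1 _ _ _ _ HD).
  set (K := (INR m / (g / 2)) ^ m * (K1 / g)).
  assert (HK : 0 <= K).
  { apply Rmult_le_pos; [apply pow_le, Rdiv_le_0_compat; [apply pos_INR | lra]|].
    apply Rdiv_le_0_compat; lra. }
  destruct (exp_decay_small (g / 2) K eps ltac:(lra) HK He) as [M [HM HMx]].
  exists M. intros L HL.
  pose proof (int_to_bound _ _ _ _ HD L L ltac:(lra) (Rle_refl _)) as Ha.
  rewrite RInt_point, Rminus_0_r in Ha. fold (lower_Gamma_deriv i s L) in Ha.
  pose proof (pow_le_exp_scaled m (- L) (g / 2) ltac:(lra) ltac:(lra)) as Hp.
  specialize (HMx (- L) ltac:(lra)).
  rewrite Rabs_mult, <- RPow_abs, Rabs_left1 by lra.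
  eapply Rle_lt_trans; [|exact HMx].
  eapply Rle_trans; [apply Rmult_le_compat; [apply pow_le; lra | apply Rabs_pos | exact Hp | exact Ha]|].
  unfold K.
  replace ((INR m / (g / 2)) ^ m * exp (g / 2 * - L) * (K1 / g * exp (g * L))) with
    ((INR m / (g / 2)) ^ m * (K1 / g) * (exp (g / 2 * - L) * exp (g * L))) by ring.
  rewrite <- exp_plus. right. f_equal. f_equal. field.
Qed.

Lemma vanishes_at_minfty_lower_expansion s k : 0 < s ->
  vanishes_at_minfty (lower_expansion s k).
Proof.
  intros Hs. apply vanishes_at_minfty_sum. intros i _.
  replace (fun L => pow_div_fact (k - i) L * pow_div_fact i (-1) * lower_Gamma_deriv i s L)
    with (fun L => pow_div_fact i (-1) / INR (fact (k - i)) * (L ^ (k - i) * lower_Gamma_deriv i s L)).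
  - apply vanishes_at_minfty_scal, vanishes_at_minfty_pow_lower_Gamma_deriv, Hs.
  - apply functional_extensionality. intros L. unfold pow_div_fact.
    pose proof (INR_fact_pos i). pose proof (INR_fact_pos (k - i)). field. lra.
Qed.

Lemma RInt_0_eq_antiderivative (phi D : R -> R) : (forall x, continuous phi x) ->
  (forall y, 0 < y -> is_derive D y (phi y)) ->
  (forall eps, 0 < eps -> exists del, 0 < del /\ forall y, 0 < y < del -> Rabs (D y) < eps) ->
  forall c, 0 < c -> RInt phi 0 c = D c.
Proof.
  intros Hphi HD Hv c Hc.
  apply Rminus_diag_uniq, Rabs_eq_0, Rle_antisym; [|apply Rabs_pos].
  apply Rle_plus_epsilon. intros e He. rewrite Rplus_0_l.
  destruct (Hv (e / 2) ltac:(lra)) as [del1 [Hdel1 Hv1]].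
  destruct (proj1 (filterlim_locally (F := locally 0) (fun y => RInt phi 0 y) (RInt phi 0 0))
     (continuous_RInt_0 phi Hphi 0) (mkposreal (e / 2) ltac:(lra))) as [del2 Hdel2].
  pose proof (cond_pos del2).
  set (y := Rmin c (Rmin del1 del2) / 2).
  assert (Hy : 0 < y /\ y < c /\ y < del1 /\ y < del2).
  { unfold y. pose proof (Rmin_l c (Rmin del1 del2)). pose proof (Rmin_r c (Rmin del1 del2)).
    pose proof (Rmin_l del1 del2). pose proof (Rmin_r del1 del2).
    assert (0 < Rmin c (Rmin del1 del2)) by (repeat apply Rmin_pos; lra). lra. }
  assert (E : RInt phi y c = D c - D y).
  { apply is_RInt_unique, (is_RInt_derive (V := R_CompleteNormedModule) D phi y c).
    - intros x Hx. rewrite Rmin_left in Hx by lra. apply HD. lra.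
    - intros x _. apply Hphi. }
  rewrite (RInt_Chasles_continuous phi 0 y c Hphi), E.
  specialize (Hv1 y ltac:(lra)).
  specialize (Hdel2 y). change (Rabs (y - 0) < del2 -> Rabs (RInt phi 0 y - RInt phi 0 0) < e / 2)
    in Hdel2.
  rewrite RInt_point, Rminus_0_r, Rminus_0_r, Rabs_right in Hdel2 by lra.
  specialize (Hdel2 ltac:(lra)).
  replace (RInt phi 0 y + (D c - D y) - D c) with (RInt phi 0 y - D y) by ring.
  eapply Rle_trans; [apply Rabs_triang|]. rewrite Rabs_Ropp. lra.
Qed.

Lemma RInt_0_eq_comp_ln (phi F F' : R -> R) a : 0 < a -> (forall x, continuous phi x) ->
  (forall L, is_derive F L (F' L)) -> vanishes_at_minfty F ->
  (forall y, 0 < y -> phi y = F' (ln a + ln y) / y) ->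
  forall c, 0 < c -> RInt phi 0 c = F (ln a + ln c).
Proof.
  intros Ha Hphi HF Hv Hphi_eq.
  apply (RInt_0_eq_antiderivative phi (fun y => F (ln a + ln y)) Hphi).
  - intros y Hy. rewrite Hphi_eq by exact Hy.
    replace (F' (ln a + ln y) / y) with ((0 + / y) * F' (ln a + ln y)) by (field; lra).
    apply (is_derive_comp (K := R_AbsRing) (V := R_NormedModule) F); [apply HF|].
    apply (is_derive_plus (K := R_AbsRing) (V := R_NormedModule));
      [apply (is_derive_const (K := R_AbsRing) (V := R_NormedModule)) | apply is_derive_ln, Hy].
  - intros eps He. destruct (Hv eps He) as [M HM].
    exists (exp (- M - ln a)). split; [apply exp_pos|].
    intros y [Hy1 Hy2]. apply HM.
    assert (ln y < - M - ln a) by (rewrite <- (ln_exp (- M - ln a)); apply ln_increasing; lra).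
    lra.
Qed.

Definition Ihat_profile (d n : nat) (p : R) : R := INR n ^ d * p ^ (d - 1) * exp (- INR n * p).

Lemma continuous_Ihat_profile d n x : continuous (Ihat_profile d n) x.
Proof. apply continuous_of_ex_derive. unfold Ihat_profile. auto_derive. exact I. Qed.

Lemma Ihat_profile_eq d n y : (1 <= d)%nat -> (1 <= n)%nat -> 0 < y ->
  Ihat_profile d n y = gamma_integrand 0 (INR d) (ln (INR n) + ln y) / y.
Proof.
  intros Hd Hn Hy.
  assert (Hnn : 0 < INR n) by (apply lt_0_INR; lia).
  unfold gamma_integrand, Ihat_profile. simpl pow. rewrite Rmult_1_l.
  rewrite <- ln_mult, exp_ln by nra.
  unfold Rminus. rewrite exp_plus.
  change (exp (INR d * ln (INR n * y))) with (Rpower (INR n * y) (INR d)).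
  rewrite Rpower_pow, Rpow_mult_distr by nra.
  replace (y ^ d) with (y ^ (d - 1) * y)
    by (replace d with (S (d - 1)) at 2 by lia; simpl; ring).
  replace (- INR n * y) with (- (INR n * y)) by ring.
  field. lra.
Qed.

Lemma mul_mean0 (phi : R -> R) c : (forall x, continuous phi x) -> 0 < c ->
  c * mean0 phi c = RInt phi 0 c.
Proof. intros Hphi Hc. rewrite mean0_eq by (try exact Hphi; lra). field. lra. Qed.

Lemma mul_iter_mean0_Ihat_profile d n k c : (1 <= d)%nat -> (1 <= n)%nat -> 0 < c ->
  c * Nat.iter (S k) mean0 (Ihat_profile d n) c = lower_expansion (INR d) k (ln (INR n) + ln c).
Proof.
  intros Hd Hn.
  assert (Hnn : 0 < INR n) by (apply lt_0_INR; lia).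
  assert (Hs : 0 < INR d) by (apply lt_0_INR; lia).
  assert (Hcont := fun m => continuous_iter_mean0 (Ihat_profile d n) m (continuous_Ihat_profile d n)).
  revert c. induction k as [|k IH]; intros c Hc;
    change (Nat.iter (S ?m) mean0 ?phi) with (mean0 (Nat.iter m mean0 phi));
    rewrite mul_mean0 by auto.
  - apply (RInt_0_eq_comp_ln _ _ (gamma_integrand 0 (INR d)) (INR n));
      auto using vanishes_at_minfty_lower_expansion.
    + intros L. apply (is_derive_ext (lower_Gamma_deriv 0 (INR d)));
        [intros; symmetry; apply lower_expansion_0 | apply is_derive_lower_Gamma_deriv, Hs].
    + intros y Hy. apply Ihat_profile_eq; auto.
  - apply (RInt_0_eq_comp_ln _ _ (lower_expansion (INR d) k) (INR n));
      auto using vanishes_at_minfty_lower_expansion, is_derive_lower_expansion.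
    intros y Hy. rewrite <- IH by exact Hy. field. lra.
Qed.

Definition tail_majorant (i : nat) (s x : R) : R := - 2 * (x ^ i * exp ((s - 1) * x - exp x)).

Definition tail_majorant' (i : nat) (s x : R) : R :=
  (2 * x ^ i * (exp x - (s - 1)) - 2 * INR i * x ^ (i - 1)) * exp ((s - 1) * x - exp x).

Lemma is_derive_tail_majorant i s x : is_derive (tail_majorant i s) x (tail_majorant' i s x).
Proof.
  unfold tail_majorant, tail_majorant'. auto_derive; [exact I|].
  replace (i - 1)%nat with (Nat.pred i) by lia. unfold Rminus. ring.
Qed.

Lemma gamma_integrand_le_tail_majorant' i s x : INR i + 1 <= s -> 1 <= x -> 4 * s <= exp x ->
  gamma_integrand i s x <= tail_majorant' i s x.
Proof.
  intros Hi Hx Hex.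
  assert (Hg : gamma_integrand i s x = x ^ i * exp x * exp ((s - 1) * x - exp x)).
  { unfold gamma_integrand. rewrite Rmult_assoc, <- exp_plus. do 2 f_equal. ring. }
  rewrite Hg. unfold tail_majorant'.
  pose proof (exp_pos ((s - 1) * x - exp x)). pose proof (pos_INR i).
  assert (Hxi : 0 <= x ^ i) by (apply pow_le; lra).
  assert (Hpred : INR i * x ^ (i - 1) <= INR i * x ^ i).
  { destruct i as [|i]; [simpl; lra|].
    replace (S i - 1)%nat with i by lia. change (x ^ S i) with (x * x ^ i).
    assert (0 <= x ^ i) by (apply pow_le; lra).
    apply Rmult_le_compat_l; [apply pos_INR | nra]. }
  apply Rmult_le_compat_r; [lra|]. nra.
Qed.

Lemma RInt_gamma_integrand_tail i s L b : INR i + 1 <= s -> 1 <= L -> 4 * s <= exp L -> L <= b ->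
  0 <= RInt (gamma_integrand i s) L b <= 2 * (L ^ i * exp ((s - 1) * L - exp L)).
Proof.
  intros Hi HL HeL Hb.
  assert (Hcont' : forall x, continuous (tail_majorant' i s) x)
    by (intros x; apply continuous_of_ex_derive; unfold tail_majorant'; auto_derive; exact I).
  split.
  - apply RInt_ge_0; [exact Hb | apply ex_RInt_of_continuous, continuous_gamma_integrand|].
    intros x Hx. unfold gamma_integrand.
    apply Rmult_le_pos; [apply pow_le; lra | left; apply exp_pos].
  - apply (Rle_trans _ (RInt (tail_majorant' i s) L b)).
    + apply RInt_le; [exact Hb | apply ex_RInt_of_continuous, continuous_gamma_integrand
                     | apply ex_RInt_of_continuous, Hcont' |].
      intros x Hx. apply gamma_integrand_le_tail_majorant'; [lra | lra |].
      eapply Rle_trans; [exact HeL | apply exp_le_exp_compat; lra].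
    + replace (RInt (tail_majorant' i s) L b) with (tail_majorant i s b - tail_majorant i s L).
      * unfold tail_majorant.
        assert (0 <= b ^ i * exp ((s - 1) * b - exp b))
          by (apply Rmult_le_pos; [apply pow_le; lra | left; apply exp_pos]).
        lra.
      * symmetry. apply is_RInt_unique.
        apply (is_RInt_derive (V := R_CompleteNormedModule) (tail_majorant i s));
          intros x _; [apply is_derive_tail_majorant | apply Hcont'].
Qed.

Lemma abs_lower_Gamma_deriv_sub_Gamma_deriv i s L :
  INR i + 1 <= s -> 1 <= L -> 4 * s <= exp L ->
  Rabs (lower_Gamma_deriv i s L - Gamma_deriv i s) <= 2 * (L ^ i * exp ((s - 1) * L - exp L)).
Proof.
  intros Hi HL HeL.
  destruct (exp_decaying_gamma_integrand i s ltac:(pose proof (pos_INR i); lra))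
    as [g [K1 [K2 HD]]].
  assert (Htail : 0 <= int_R (gamma_integrand i s) - int_to (gamma_integrand i s) L
                   <= 2 * (L ^ i * exp ((s - 1) * L - exp L))).
  { apply (is_lim_seq_between _ _ _ _ (is_lim_int_R_minus_int_to _ _ _ _ HD L)).
    destruct (INR_unbounded L) as [N HN].
    exists N. intros m Hm. apply le_INR in Hm.
    apply RInt_gamma_integrand_tail; try assumption; lra. }
  unfold lower_Gamma_deriv, Gamma_deriv. rewrite Rabs_minus_sym, Rabs_right; lra.
Qed.

Lemma abs_pow_div_fact_le m L : Rabs (pow_div_fact m L) <= Rabs L ^ m.
Proof.
  unfold pow_div_fact.
  pose proof (INR_fact_pos m).
  assert (Hf : 1 <= INR (fact m)) by (apply (le_INR 1), lt_O_fact).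
  assert (0 <= Rabs L ^ m) by (apply pow_le, Rabs_pos).
  rewrite Rabs_div, <- RPow_abs, (Rabs_right (INR _)) by lra.
  apply (Rmult_le_reg_r (INR (fact m))); [lra|].
  unfold Rdiv. rewrite Rmult_assoc, Rinv_l, Rmult_1_r by lra. nra.
Qed.

Lemma abs_expansion_sub_le k L (a b : nat -> R) B : 0 <= L ->
  (forall i, (i <= k)%nat -> Rabs (a i - b i) <= L ^ i * B) ->
  Rabs (expansion k L a - expansion k L b) <= INR (S k) * L ^ k * B.
Proof.
  intros HL Hab. unfold expansion. rewrite <- minus_sum.
  eapply Rle_trans; [apply sum_f_R0_triangle|].
  replace (INR (S k) * L ^ k * B) with (L ^ k * B * INR (S k)) by ring.
  rewrite <- sum_cte.
  apply sum_Rle. intros i Hi.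
  replace (pow_div_fact (k - i) L * pow_div_fact i (-1) * a i
           - pow_div_fact (k - i) L * pow_div_fact i (-1) * b i)
    with (pow_div_fact (k - i) L * pow_div_fact i (-1) * (a i - b i)) by ring.
  rewrite !Rabs_mult.
  assert (H1 := abs_pow_div_fact_le (k - i) L). rewrite (Rabs_right L) in H1 by lra.
  assert (H2 := abs_pow_div_fact_le i (-1)).
  replace (Rabs (-1)) with 1 in H2 by (rewrite Rabs_left; lra). rewrite pow1 in H2.
  replace (L ^ k * B) with (L ^ (k - i) * 1 * (L ^ i * B))
    by (rewrite Rmult_1_r, <- Rmult_assoc, <- pow_add; f_equal; f_equal; lia).
  apply Rmult_le_compat; [apply Rmult_le_pos; apply Rabs_pos | apply Rabs_pos | | apply Hab, Hi].
  apply Rmult_le_compat; try apply Rabs_pos; assumption.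
Qed.

Lemma expansion_eq_sum k L (b : nat -> R) : L <> 0 ->
  L ^ k * sum_f_R0 (fun j => (-1) ^ j * b j / (INR (fact j) * INR (fact (k - j))) / L ^ j) k
  = expansion k L b.
Proof.
  intros HL. unfold expansion. rewrite scal_sum. apply sum_eq. intros j Hj.
  unfold pow_div_fact.
  replace (L ^ k) with (L ^ (k - j) * L ^ j) by (rewrite <- pow_add; f_equal; lia).
  pose proof (INR_fact_pos j). pose proof (INR_fact_pos (k - j)).
  assert (L ^ j <> 0) by (apply pow_nonzero, HL).
  field. repeat split; lra.
Qed.

Lemma iter_int_Ihat_integrand d n :
  iter_int d (Ihat_integrand d n) (Nat.iter d mean0 (Ihat_profile d n) 1).
Proof.
  replace (Ihat_integrand d n) with (fun xs => Ihat_profile d n (1 * prod_one_minus xs))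
    by (apply functional_extensionality; intros xs; rewrite Rmult_1_l; reflexivity).
  apply iter_int_prod_one_minus, continuous_Ihat_profile.
Qed.

Lemma iter_mean0_Ihat_profile_1 d n : (1 <= d)%nat -> (1 <= n)%nat ->
  Nat.iter d mean0 (Ihat_profile d n) 1 = lower_expansion (INR d) (d - 1) (ln (INR n)).
Proof.
  intros Hd Hn.
  assert (H := mul_iter_mean0_Ihat_profile d n (d - 1) 1 Hd Hn Rlt_0_1).
  replace (S (d - 1)) with d in H by lia.
  rewrite ln_1, Rplus_0_r, Rmult_1_l in H. exact H.
Qed.

Lemma exp_tail_at_ln d n : (1 <= d)%nat -> (1 <= n)%nat ->
  exp ((INR d - 1) * ln (INR n) - exp (ln (INR n))) = INR n ^ (d - 1) * exp (- INR n).
Proof.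
  intros Hd Hn.
  assert (Hnn : 0 < INR n) by (apply lt_0_INR; lia).
  replace (INR d - 1) with (INR (d - 1)) by (rewrite minus_INR by exact Hd; reflexivity).
  unfold Rminus. rewrite exp_plus, exp_ln by exact Hnn.
  change (exp (INR (d - 1) * ln (INR n))) with (Rpower (INR n) (INR (d - 1))).
  rewrite Rpower_pow by exact Hnn. reflexivity.
Qed.

Theorem lemmaL (d : nat) (hd : (1 <= d)%nat) :
  exists G : nat -> R -> R, (forall j, GammaDer j (G j)) /\
  exists C : R, exists N : nat, forall n : nat, (N <= n)%nat ->
    exists v, iter_int d (Ihat_integrand d n) v /\
      Rabs (v - (ln (INR n)) ^ (d - 1) *
              sum_f_R0 (fun j => (-1) ^ j * G j (INR d)
                                 / (INR (fact j) * INR (fact (d - 1 - j)))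
                                 / (ln (INR n)) ^ j) (d - 1))
      <= C * (INR n * ln (INR n)) ^ (d - 1) * exp (- INR n).
Proof.
  exists Gamma_deriv. split; [exact GammaDer_Gamma_deriv|].
  exists (2 * INR d), (4 * d + 3)%nat. intros n Hn.
  assert (HnR : 4 * INR d + 3 <= INR n)
    by (replace (4 * INR d + 3) with (INR (4 * d + 3)) by (rewrite plus_INR, mult_INR; simpl; ring);
        apply le_INR, Hn).
  assert (Hn1 : (1 <= n)%nat) by lia.
  pose proof (pos_INR d).
  assert (HL : 1 <= ln (INR n))
    by (rewrite <- (ln_exp 1); apply ln_le; [apply exp_pos | pose proof exp_le_3; lra]).
  exists (Nat.iter d mean0 (Ihat_profile d n) 1). split; [apply iter_int_Ihat_integrand|].
  rewrite iter_mean0_Ihat_profile_1, expansion_eq_sum by (try assumption; lra).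
  eapply Rle_trans.
  - apply (abs_expansion_sub_le _ _ _ _ (2 * (INR n ^ (d - 1) * exp (- INR n)))); [lra|].
    intros i Hi.
    replace (ln (INR n) ^ i * (2 * (INR n ^ (d - 1) * exp (- INR n))))
      with (2 * (ln (INR n) ^ i * (INR n ^ (d - 1) * exp (- INR n)))) by ring.
    rewrite <- (exp_tail_at_ln d n hd Hn1).
    apply abs_lower_Gamma_deriv_sub_Gamma_deriv; [| exact HL | rewrite exp_ln; lra].
    apply le_INR in Hi. rewrite minus_INR in Hi by exact hd. simpl in Hi. lra.
  - replace (S (d - 1)) with d by lia. rewrite Rpow_mult_distr. right. ring.
Qed.
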